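(* Let $d\ge1$, $n\ge0$, and for an $\mathbf{OI}_d$-morphism $\phi=(f,g)\colon[n]\to[m]$ let $w(\phi)$ be the word of length $m$ in the alphabet $\{*,1,\dots,d\}$ whose $i$-th letter is $*$ if $i\in f([n])$ and is $g(i)$ otherwise. Then $\phi$ is determined by $w(\phi)$, and for $\mathbf{OI}_d$-morphisms $\phi\colon[n]\to[m]$, $\phi'\colon[n]\to[m']$, there exists an $\mathbf{OI}_d$-morphism $\psi\colon[m]\to[m']$ with $\psi\circ\phi=\phi'$ if and only if $w(\phi)$ is a (not necessarily contiguous) subsequence of $w(\phi')$. Consequently the set $X_n=\coprod_{m\ge n}\hom_{\mathbf{OI}_d}([n],[m])$, partially ordered by $\phi\le\phi'$ iff $\phi'=\psi\circ\phi$ for some $\mathbf{OI}_d$-morphism $\psi$, is well-ordered in the sense that every infinite sequence $\phi_1,\phi_2,\dots$ in $X_n$ has $i<j$ with $\phi_i\le\phi_j$.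
   Context: $\mathbf{OI}_d$ is the category whose objects are finite totally ordered sets; a morphism $S\to T$ is a pair $(f,g)$ with $f\colon S\to T$ an order-preserving injection and $g\colon T\setminus f(S)\to[d]=\{1,\dots,d\}$ arbitrary; the composite of $(f,g)\colon S\to T$ and $(f',g')\colon T\to U$ is $(f'\circ f,g'')$ where $g''(u)=g'(u)$ for $u\notin f'(T)$ and $g''(f'(t))=g(t)$ for $t\in T\setminus f(S)$. $[n]=\{1,\dots,n\}$ with its usual order. *)

From mathcomp Require Import all_boot.
Set Implicit Arguments. Unset Strict Implicit. Unset Printing Implicit Defensive.

(* An OI_d morphism [n] -> [m]: an order-preserving injection f : [n] -> [m]
   (i.e. strictly increasing), together with g : [m] \ f([n]) -> [d].
   [k] = {1..k} is modelled by 'I_k = {0..k-1} (same order), and [d] by 'I_d. *)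
Record OIhom (d n m : nat) := OIHom {
  homf : 'I_n -> 'I_m;
  homf_mono : forall i j : 'I_n, i < j -> homf i < homf j;
  homg : forall t : 'I_m, t \notin codom homf -> 'I_d
}.

Section Comp.
Variables (d n m k : nat) (psi : OIhom d m k) (phi : OIhom d n m).

Lemma comp_mono (i j : 'I_n) : i < j -> homf psi (homf phi i) < homf psi (homf phi j).
Proof. by move=> H; apply: homf_mono; apply: homf_mono. Qed.

Definition comp_f (i : 'I_n) : 'I_k := homf psi (homf phi i).

Lemma comp_g_proof (u : 'I_k) (hu : u \notin codom comp_f) (H : u \in codom (homf psi)) :
  @iinv _ _ (homf psi) (mem 'I_m) u H \notin codom (homf phi).
Proof.
apply/codomP => [[x Hx]]; move/codomP: hu; apply; exists x.
by rewrite /comp_f -Hx f_iinv.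
Qed.

(* g''(u) = g'(u) if u is not in the image of f', and g(t) if u = f'(t). *)
Definition comp_g (u : 'I_k) (hu : u \notin codom comp_f) : 'I_d :=
  (if u \in codom (homf psi) as b return (u \in codom (homf psi)) = b -> 'I_d
   then fun H => @homg _ _ _ phi _ (comp_g_proof hu H)
   else fun H => @homg _ _ _ psi u (negbT H)) (erefl _).

Definition OIcomp : OIhom d n k := OIHom comp_mono comp_g.
End Comp.

(* The word w(phi): letter i is None (= '*') if i is in f([n]), Some (g i) otherwise. *)
Definition OIletter d n m (phi : OIhom d n m) (i : 'I_m) : option 'I_d :=
  (if i \in codom (homf phi) as b return (i \in codom (homf phi)) = b -> option 'I_d
   then fun _ => None
   else fun H => Some (@homg _ _ _ phi i (negbT H))) (erefl _).

Definition OIword d n m (phi : OIhom d n m) : seq (option 'I_d) :=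
  [seq OIletter phi i | i <- enum 'I_m].

Definition OIle d n (x y : {m : nat & OIhom d n m}) : Prop :=
  exists psi : OIhom d (tag x) (tag y), OIcomp psi (tagged x) = tagged y.

From mathcomp Require Import all_boot.
From Stdlib Require Import Classical ClassicalEpsilon ProofIrrelevance FunctionalExtensionality.
Set Implicit Arguments. Unset Strict Implicit. Unset Printing Implicit Defensive.

(* The stars of w(phi) mark the image of the increasing map f, which is therefore
   determined, and the other letters are g.  In w(psi o phi) the word w(phi) sits
   at the positions f_psi([m]); conversely an embedding of w(phi) into w(phi') as
   a subsequence is an increasing map [m] -> [m'] sending stars to stars, and by
   counting stars it hits all n stars of w(phi'), so it is f_psi for the psi whose
   remaining letters are read off w(phi').  Well-ordering of X_n is then Higman's
   lemma over the alphabet {*, 1, ..., d}, by Nash-Williams' minimal bad sequence. *)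

Lemma dep_ifT (b : bool) (T : Type) (F1 : b = true -> T) (F2 : b = false -> T) (H : b = true) :
  (if b as b' return b = b' -> T then F1 else F2) (erefl b) = F1 H.
Proof. by subst b. Qed.

Lemma dep_ifF (b : bool) (T : Type) (F1 : b = true -> T) (F2 : b = false -> T) (H : b = false) :
  (if b as b' return b = b' -> T then F1 else F2) (erefl b) = F2 H.
Proof. by subst b. Qed.

Lemma sorted_ltn_enum_ord b : sorted (relpre val ltn) (enum 'I_b).
Proof. by rewrite -sorted_map val_enum_ord iota_ltn_sorted. Qed.

Section IncreasingOrd.
Variables (a b : nat) (f : 'I_a -> 'I_b).
Hypothesis f_incr : {homo f : i j / i < j}.

Lemma incr_ord_inj : injective f.
Proof.
move=> i j e; case: (ltngtP i j) => [h|h|/val_inj//].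
  by have := f_incr h; rewrite e ltnn.
by have := f_incr h; rewrite e ltnn.
Qed.

Lemma sorted_codom_incr : sorted (relpre val ltn) (codom f).
Proof.
rewrite codomE sorted_map; apply: (@sub_sorted _ (relpre val ltn)) => [i j|].
  exact: f_incr.
exact: sorted_ltn_enum_ord.
Qed.

Lemma codom_incr_filter : codom f = [seq t <- enum 'I_b | t \in codom f].
Proof.
have ltn_ord_trans : transitive (relpre (val : 'I_b -> nat) ltn).
  by move=> y x z; exact: ltn_trans.
apply: (irr_sorted_eq ltn_ord_trans) => //.
- by move=> x; rewrite /= ltnn.
- exact: sorted_codom_incr.
- by rewrite sorted_filter // sorted_ltn_enum_ord.
- by move=> t; rewrite mem_filter mem_enum andbT.
Qed.

End IncreasingOrd.

Lemma codom_incr_eq a b (f g : 'I_a -> 'I_b) :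
  {homo f : i j / i < j} -> {homo g : i j / i < j} -> codom f =i codom g -> f =1 g.
Proof.
move=> f_incr g_incr fg; have : codom f = codom g.
  by rewrite codom_incr_filter // (eq_filter fg) -codom_incr_filter.
by rewrite !codomE => /eq_in_map fgE i; apply: fgE; rewrite mem_enum.
Qed.

Lemma recurrent_value (U : finType) (h : nat -> U) :
  exists a, forall N, exists2 k, N <= k & h k = a.
Proof.
apply: NNPP => no_rec.
have /fin_all_exists [B hB] : forall a, exists N, forall k, N <= k -> h k != a.
  move=> a; have /not_all_ex_not [N hN] : ~ forall N, exists2 k, N <= k & h k = a.
    by move=> ha; apply: no_rec; exists a.
  by exists N => k hk; apply/eqP => e; apply: hN; exists k.
pose N := \max_a B a.
by have /eqP := hB (h N) N (@leq_bigmax U B (h N)).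
Qed.

Lemma constant_subsequence (U : finType) (h : nat -> U) :
  exists2 e : nat -> nat, {homo e : i j / i < j} & forall j, h (e j) = h (e 0).
Proof.
have [a ha] := recurrent_value h.
have hex N : exists k, (N <= k) && (h k == a).
  by have [k hk hka] := ha N; exists k; rewrite hk hka eqxx.
pose next N := ex_minn (hex N).
have next_spec N : N <= next N /\ h (next N) = a.
  by rewrite /next; case: ex_minnP => k /andP [hk /eqP hka].
pose e j := iter j (fun k => next k.+1) (next 0).
have ea j : h (e j) = a by case: j => [|j]; apply: (next_spec _).2.
exists e; last by move=> j; rewrite !ea.
by apply: homo_ltn; [exact: ltn_trans | move=> j; exact: (next_spec _).1].
Qed.

Section Higman.
Variable T : finType.

Definition bad (f : nat -> seq T) := forall i j, i < j -> ~~ subseq (f i) (f j).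

Definition bad_prefix (p : seq (seq T)) :=
  exists2 f, bad f & forall i, i < size p -> f i = nth [::] p i.

Definition minimal_extension p w :=
  bad_prefix (rcons p w) /\ forall w', size w' < size w -> ~ bad_prefix (rcons p w').

Lemma bad_prefix_rcons p f : bad f -> (forall i, i < size p -> f i = nth [::] p i) ->
  bad_prefix (rcons p (f (size p))).
Proof.
move=> bf hf; exists f => // i; rewrite size_rcons ltnS leq_eqVlt nth_rcons.
by case/orP => [/eqP ->|hi]; rewrite ?ltnn ?eqxx // hi hf.
Qed.

Lemma exists_minimal_extension p : bad_prefix p -> exists w, minimal_extension p w.
Proof.
case=> f bf hf; have ext_w0 := bad_prefix_rcons bf hf.
apply: NNPP => no_min.
suff no_ext k w : size w < k -> ~ bad_prefix (rcons p w) by exact: no_ext _ _ (ltnSn _) ext_w0.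
elim: k w => [|k IH] w // hw ext_w; apply: no_min; exists w; split => // w' hw'.
exact/IH/(leq_trans hw').
Qed.

Definition next_minimal p := epsilon (inhabits [::]) (minimal_extension p).

Fixpoint min_prefix k :=
  if k is k'.+1 then rcons (min_prefix k') (next_minimal (min_prefix k')) else [::].

Definition min_bad k := next_minimal (min_prefix k).

Lemma size_min_prefix k : size (min_prefix k) = k.
Proof. by elim: k => //= k IH; rewrite size_rcons IH. Qed.

Lemma nth_min_prefix k i : i < k -> nth [::] (min_prefix k) i = min_bad i.
Proof.
elim: k => // k IH; rewrite ltnS leq_eqVlt /= nth_rcons size_min_prefix.
by case/orP => [/eqP ->|hi]; rewrite ?ltnn ?eqxx // hi IH.
Qed.

Hypothesis bad_exists : exists f, bad f.

Lemma min_prefix_bad k : bad_prefix (min_prefix k).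
Proof.
elim: k => [|k IH] /=; first by case: bad_exists => f bf; exists f.
exact: (epsilon_spec _ _ (exists_minimal_extension IH)).1.
Qed.

Lemma min_bad_minimal k w : size w < size (min_bad k) -> ~ bad_prefix (rcons (min_prefix k) w).
Proof. exact: (epsilon_spec _ _ (exists_minimal_extension (min_prefix_bad k))).2. Qed.

Lemma min_bad_bad : bad min_bad.
Proof.
move=> i j hij; have [f bf hf] := min_prefix_bad j.+1.
have fE l : l <= j -> f l = min_bad l.
  by move=> hl; rewrite hf ?size_min_prefix ?nth_min_prefix.
by rewrite -fE ?(ltnW hij) // -fE //; apply: bf.
Qed.

Lemma min_bad_neq0 k : min_bad k != [::].
Proof. by apply/eqP => e; have := min_bad_bad (ltnSn k); rewrite e sub0seq. Qed.

(* Drop the first letter from a subsequence of min_bad on which the first letter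
   is constant: this is still bad and beats the minimality of min_bad. *)
Lemma no_bad_sequence : False.
Proof.
have [e e_incr e_head] := constant_subsequence (fun k => ohead (min_bad k)).
set k0 := e 0.
have e_ge0 j : k0 <= e j by case: j => // j; apply/ltnW/e_incr.
pose g i := if i < k0 then min_bad i else behead (min_bad (e (i - k0))).
apply: (@min_bad_minimal k0 (behead (min_bad k0))).
  by have := min_bad_neq0 k0; case: (min_bad k0).
have -> : behead (min_bad k0) = g (size (min_prefix k0)).
  by rewrite size_min_prefix /g ltnn subnn.
apply: bad_prefix_rcons => [i j hij|i]; last first.
  by rewrite size_min_prefix => hi; rewrite /g hi nth_min_prefix.
rewrite /g; case: ifP => hi; case: ifP => hj.
- exact: min_bad_bad.
- apply: contra (min_bad_bad (leq_trans hi (e_ge0 (j - k0)))).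
  by move/subseq_trans; apply; rewrite -drop1 drop_subseq.
- by have := leq_ltn_trans (ltnW hij) hj; rewrite hi.
- have hij' : e (i - k0) < e (j - k0).
    by apply/e_incr/ltn_sub2r => //; apply: leq_ltn_trans hij; rewrite leqNgt hi.
  apply: contra (min_bad_bad hij').
  have same_head : ohead (min_bad (e (i - k0))) = ohead (min_bad (e (j - k0))).
    by rewrite e_head [RHS]e_head.
  move: same_head (min_bad_neq0 (e (i - k0))) (min_bad_neq0 (e (j - k0))).
  case: (min_bad (e (i - k0))) => // x s; case: (min_bad (e (j - k0))) => // y t [<-] _ _.
  by rewrite /= eqxx.
Qed.

End Higman.

Theorem higman (T : finType) (f : nat -> seq T) : exists i j, i < j /\ subseq (f i) (f j).
Proof.
apply: NNPP => good_fails; apply: (@no_bad_sequence T); exists f => i j hij.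
by apply/negP => hs; apply: good_fails; exists i, j.
Qed.

Lemma subseq_nth_embedding (T : eqType) (x0 : T) (s2 s1 : seq T) : subseq s1 s2 ->
  exists p : nat -> nat, (forall i j, i < j -> j < size s1 -> p i < p j) /\
   (forall i, i < size s1 -> p i < size s2 /\ nth x0 s2 (p i) = nth x0 s1 i).
Proof.
elim: s2 s1 => [|y s2 IH] [|x s1] //= => [_|_|]; try by exists id.
case: eqP => [<-|_] /IH.
  case=> [q [q_incr q_nth]]; exists (fun i => if i is i'.+1 then (q i').+1 else 0); split.
    by move=> [|i] [|j] //= hij hj; rewrite ltnS q_incr.
  by move=> [|i] //= hi; have [] := q_nth i hi.
case=> [q [q_incr q_nth]]; exists (fun i => (q i).+1); split.
  by move=> i j hij hj; rewrite ltnS q_incr.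
by move=> i hi; have [] := q_nth i hi.
Qed.

Section OIhoms.
Variable d : nat.

Lemma homg_congr n m (phi : OIhom d n m) t1 t2 (H1 : t1 \notin codom (homf phi))
  (H2 : t2 \notin codom (homf phi)) : t1 = t2 -> homg H1 = homg H2.
Proof. by move=> e; subst t2; rewrite (bool_irrelevance H1 H2). Qed.

Lemma OIletter_in n m (phi : OIhom d n m) i : i \in codom (homf phi) -> OIletter phi i = None.
Proof. by move=> H; rewrite /OIletter (dep_ifT _ _ H). Qed.

Lemma OIletter_out n m (phi : OIhom d n m) i (H : i \notin codom (homf phi)) :
  OIletter phi i = Some (homg H).
Proof. by rewrite /OIletter (dep_ifF _ _ (negbTE H)); congr Some; apply: homg_congr. Qed.

Lemma OIletter_eq_None n m (phi : OIhom d n m) i :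
  (OIletter phi i == None) = (i \in codom (homf phi)).
Proof.
by case: (boolP (i \in codom _)) => [H|H]; rewrite ?(OIletter_in H) ?(OIletter_out H).
Qed.

Lemma homf_inj n m (phi : OIhom d n m) : injective (homf phi).
Proof. exact/incr_ord_inj/homf_mono. Qed.

Lemma OIletter_comp_homf n m k (psi : OIhom d m k) (phi : OIhom d n m) t :
  OIletter (OIcomp psi phi) (homf psi t) = OIletter phi t.
Proof.
case: (boolP (t \in codom (homf phi))) => Ht.
  rewrite (OIletter_in Ht) OIletter_in //.
  by case/codomP: Ht => [j ->]; apply/codomP; exists j.
have H' : homf psi t \notin codom (homf (OIcomp psi phi)).
  apply: contra Ht => /codomP [j /homf_inj ->]; exact: codom_f.
rewrite (OIletter_out H') (OIletter_out Ht); congr Some.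
rewrite /= /comp_g (dep_ifT _ _ (codom_f _ _)); apply: homg_congr.
exact: (iinv_f (@homf_inj _ _ psi)).
Qed.

Lemma OIletter_comp_out n m k (psi : OIhom d m k) (phi : OIhom d n m) t :
  t \notin codom (homf psi) -> OIletter (OIcomp psi phi) t = OIletter psi t.
Proof.
move=> Ht; have H' : t \notin codom (homf (OIcomp psi phi)).
  by apply: contra Ht => /codomP [j ->]; exact: codom_f.
rewrite (OIletter_out H') (OIletter_out Ht); congr Some.
by rewrite /= /comp_g (dep_ifF _ _ (negbTE Ht)); apply: homg_congr.
Qed.

Lemma OIhom_ext n m (phi phi' : OIhom d n m) :
  homf phi =1 homf phi' -> OIletter phi =1 OIletter phi' -> phi = phi'.
Proof.
case: phi phi' => f f_mono g [f' f_mono' g'] /= /functional_extensionality ff'.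
subst f'; rewrite (proof_irrelevance _ f_mono f_mono') => letter_eq.
congr OIHom; apply: functional_extensionality_dep => t.
apply: functional_extensionality_dep => H; have := letter_eq t.
rewrite (OIletter_out (phi := OIHom f_mono' g) H).
by rewrite (OIletter_out (phi := OIHom f_mono' g') H) => [[]].
Qed.

Lemma size_OIword n m (phi : OIhom d n m) : size (OIword phi) = m.
Proof. by rewrite size_map size_enum_ord. Qed.

Lemma nth_OIword n m (phi : OIhom d n m) (i : 'I_m) : nth None (OIword phi) i = OIletter phi i.
Proof. by rewrite /OIword (nth_map i) ?size_enum_ord // nth_ord_enum. Qed.

Lemma OIword_inj n m (phi phi' : OIhom d n m) : OIword phi = OIword phi' -> phi = phi'.
Proof.
move=> /eq_in_map letter_eq.
have {}letter_eq : OIletter phi =1 OIletter phi' by move=> i; apply: letter_eq; rewrite mem_enum.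
apply: OIhom_ext => //; apply: codom_incr_eq; try exact: homf_mono.
by move=> i; rewrite -!OIletter_eq_None letter_eq.
Qed.
End OIhoms.

Section Factorization.
Variables (d n : nat).

Lemma OIword_comp_subseq m k (psi : OIhom d m k) (phi : OIhom d n m) :
  subseq (OIword phi) (OIword (OIcomp psi phi)).
Proof.
have -> : OIword phi = map (OIletter (OIcomp psi phi)) (codom (homf psi)).
  by rewrite codomE -map_comp; apply: eq_map => t /=; rewrite OIletter_comp_homf.
rewrite codom_incr_filter; last exact: homf_mono.
exact/map_subseq/filter_subseq.
Qed.

Section LetterEmbedding.
Variables (m m' : nat) (phi : OIhom d n m) (phi' : OIhom d n m') (p : 'I_m -> 'I_m').
Hypotheses (p_incr : {homo p : i j / i < j})
  (p_letter : forall i, OIletter phi' (p i) = OIletter phi i).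

(* Both sides have n elements, and p maps the n stars of w(phi) to stars of w(phi'). *)
Lemma codom_letter_embedding : codom (p \o homf phi) =i codom (homf phi').
Proof.
have p_inj : injective (p \o homf phi) := inj_comp (incr_ord_inj p_incr) (@homf_inj _ _ _ phi).
apply/subset_cardP.
  by rewrite (card_codom p_inj) (card_codom (@homf_inj _ _ _ phi')) !card_ord.
apply/subsetP => _ /codomP [j ->] /=.
by rewrite -OIletter_eq_None p_letter OIletter_eq_None codom_f.
Qed.

Lemma OIfactor_of_letter_embedding (hd : 0 < d) :
  exists psi : OIhom d m m', OIcomp psi phi = phi'.
Proof.
pose g t (_ : t \notin codom p) := odflt (Ordinal hd) (OIletter phi' t).
pose psi := OIHom p_incr g.
exists psi; apply: OIword_inj; apply: eq_map => t.
case: (boolP (t \in codom p)) => [/codomP [i ->]|Ht].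
  by rewrite p_letter; exact: (OIletter_comp_homf psi phi i).
have Ht' : t \notin codom (homf phi').
  by rewrite -codom_letter_embedding; apply: contra Ht => /codomP [j ->]; exact: codom_f.
have Ht_psi : t \notin codom (homf psi) by [].
by rewrite (OIletter_comp_out _ Ht_psi) (OIletter_out Ht_psi) /= /g (OIletter_out Ht').
Qed.
End LetterEmbedding.

Lemma OIfactor_subseq (hd : 0 < d) m m' (phi : OIhom d n m) (phi' : OIhom d n m') :
  (exists psi : OIhom d m m', OIcomp psi phi = phi') <-> subseq (OIword phi) (OIword phi').
Proof.
split=> [[psi <-]|/(subseq_nth_embedding None) [p [p_incr p_nth]]].
  exact: OIword_comp_subseq.
rewrite !size_OIword in p_incr p_nth.
have p_lt (i : 'I_m) : p i < m' by have [] := p_nth i (ltn_ord i).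
apply: (@OIfactor_of_letter_embedding _ _ _ _ (fun i => Ordinal (p_lt i))) hd.
  by move=> i j hij; apply: p_incr.
by move=> i; rewrite -!nth_OIword /=; have [] := p_nth i (ltn_ord i).
Qed.
End Factorization.

Theorem mainTheorem3 (d n : nat) (hd : 1 <= d) :
  (forall (m : nat) (phi phi' : OIhom d n m), OIword phi = OIword phi' -> phi = phi')
  /\ (forall (m m' : nat) (phi : OIhom d n m) (phi' : OIhom d n m'),
        (exists psi : OIhom d m m', OIcomp psi phi = phi')
        <-> subseq (OIword phi) (OIword phi'))
  /\ (forall s : nat -> {m : nat & OIhom d n m},
        exists i j : nat, i < j /\ OIle (s i) (s j)).
Proof.
split; first by move=> m; apply: OIword_inj.
split; first by move=> m m'; apply: OIfactor_subseq.
move=> s; have [i [j [hij word_sub]]] := higman (fun k => OIword (tagged (s k))).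
by exists i, j; split=> //; apply/(OIfactor_subseq hd).
Qed.
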